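(* Let $f:\mathbb{R}^n\to\mathbb{R}$ be $L$-smooth (differentiable with $L$-Lipschitz gradient) and $\mu$-strongly convex with $0<\mu\le L$, let $\mathcal{X}\subset\mathbb{R}^n$ be a nonempty closed convex set, and let $x^\star$ be the unique minimizer of $f$ over $\mathcal{X}$. Let $x^t\in\mathbb{R}^n$ be a (possibly random) point and $g^t$ a random vector in $\mathbb{R}^n$ such that, with $\mathbb{E}_t[\cdot]=\mathbb{E}[\cdot\mid x^t]$, $$\|\mathbb{E}_t[g^t]-\nabla f(x^t)\|\le C_t,\qquad \mathbb{E}_t\|g^t-\mathbb{E}_t[g^t]\|^2\le D_t$$ for some $C_t,D_t\ge0$. Let $x^{t+1}=P_{\mathcal{X}}(x^t-\eta g^t)$ with $\eta=\frac{1}{2(\mu+L)}$, where $P_{\mathcal{X}}$ is the Euclidean projection onto $\mathcal{X}$. Then $$\mathbb{E}_t\|x^{t+1}-x^\star\|^2\le\Big(1-\frac{\mu}{2(\mu+L)}\Big)\|x^t-x^\star\|^2+\Big(\frac{1}{2(\mu+L)^2}+\frac{1}{2\mu L}\Big)C_t^2+\frac{1}{4(\mu+L)^2}D_t.$$ *)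

From HB Require Import structures.
From mathcomp Require Import all_boot all_order all_algebra.
From mathcomp Require Import all_classical all_reals all_analysis.
Set Implicit Arguments. Unset Strict Implicit. Unset Printing Implicit Defensive.
Import Order.TTheory GRing.Theory Num.Theory.
Import numFieldNormedType.Exports.
Local Open Scope ring_scope.

Definition dotv {R : realType} {n : nat} (u v : 'rV[R]_n) : R :=
  \sum_(i < n) u ord0 i * v ord0 i.
Definition sqnorm {R : realType} {n : nat} (v : 'rV[R]_n) : R := dotv v v.
Definition enorm {R : realType} {n : nat} (v : 'rV[R]_n) : R := Num.sqrt (sqnorm v).

Definition has_gradient {R : realType} {n : nat}
  (f : 'rV[R]_n -> R) (gf : 'rV[R]_n -> 'rV[R]_n) : Prop :=
  forall x, differentiable f x /\ forall v, 'd f x v = dotv (gf x) v.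

Definition L_smooth {R : realType} {n : nat}
  (L : R) (f : 'rV[R]_n -> R) (gf : 'rV[R]_n -> 'rV[R]_n) : Prop :=
  has_gradient f gf /\ forall x y, enorm (gf x - gf y) <= L * enorm (x - y).

Definition strongly_convex {R : realType} {n : nat} (mu : R) (f : 'rV[R]_n -> R) : Prop :=
  forall x y (l : R), 0 <= l <= 1 ->
    f (l *: x + (1 - l) *: y) <=
      l * f x + (1 - l) * f y - mu / 2 * l * (1 - l) * sqnorm (x - y).

Definition is_projection {R : realType} {n : nat}
  (X : set 'rV[R]_n) (p : 'rV[R]_n -> 'rV[R]_n) : Prop :=
  forall y, X (p y) /\ forall z, X z -> enorm (y - p y) <= enorm (y - z).

Definition mean_vec {R : realType} {n : nat} {d} {T : measurableType d}
  (P : probability T R) (g : T -> 'rV[R]_n) : 'rV[R]_n :=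
  \row_(i < n) fine (\int[P]_w ((g w ord0 i)%:E)).

(** Since [xs] minimizes [f] over the convex set [X], the projection moves no
  point farther from [xs] than the unprojected gradient step taken at [xs]:
  [|P y - xs| <= |y - (xs - eta gf xs)|].  For [y = x - eta g] the right-hand
  side is [|c - eta (g - E g)|] with [c = x - xs - eta (E g - gf xs)]; in
  expectation the cross term vanishes and the last term gives [eta^2 D].
  Writing [E g - gf xs = (gf x - gf xs) + (E g - gf x)], Young's inequality
  separates the bias, bounded by [C], from the exact gradient step, which
  contracts by [(2L + mu) / (2(mu + L))] thanks to the co-coercivity of the
  gradient of a strongly convex smooth function. *)

From HB Require Import structures.
From mathcomp Require Import all_boot all_order all_algebra.
From mathcomp Require Import all_classical all_reals all_analysis.
From mathcomp Require Import ring lra.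
Import Order.TTheory GRing.Theory Num.Theory.
Import numFieldNormedType.Exports.
Local Open Scope classical_set_scope.
Local Open Scope ring_scope.

Lemma ler_of_forall_le_addM {R : realFieldType} (a b c : R) : 0 <= c ->
  (forall t, 0 < t <= 1 -> a <= b + t * c) -> a <= b.
Proof.
move=> c0 h; apply/ler_addgt0Pr => e e0.
have c1 : 0 < c + 1 by rewrite ltr_wpDl.
pose t := Order.min 1 (e / (c + 1)).
have t0 : 0 < t by rewrite lt_min ltr01 divr_gt0.
apply: le_trans (h t _) _; first by rewrite t0 ge_min lexx.
rewrite lerD2l; apply: le_trans (_ : e / (c + 1) * c <= e).
  by rewrite ler_wpM2r // ge_min lexx orbT.
by rewrite mulrAC ler_pdivrMr // ler_pM2l // lerDl.
Qed.

Section InnerProduct.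
Context {R : realType} {n : nat}.
Implicit Types u v w : 'rV[R]_n.

Lemma dotvC u v : dotv u v = dotv v u.
Proof. by apply: eq_bigr => i _; rewrite mulrC. Qed.

Lemma dotvDl u w v : dotv (u + w) v = dotv u v + dotv w v.
Proof. by rewrite /dotv -big_split; apply: eq_bigr => i _; rewrite mxE mulrDl. Qed.

Lemma dotvZl (k : R) u v : dotv (k *: u) v = k * dotv u v.
Proof. by rewrite /dotv mulr_sumr; apply: eq_bigr => i _; rewrite mxE mulrA. Qed.

Lemma dotvNl u v : dotv (- u) v = - dotv u v.
Proof. by rewrite -scaleN1r dotvZl mulN1r. Qed.

Lemma dotvBl u w v : dotv (u - w) v = dotv u v - dotv w v.
Proof. by rewrite dotvDl dotvNl. Qed.

Lemma dotvDr u v w : dotv u (v + w) = dotv u v + dotv u w.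
Proof. by rewrite dotvC dotvDl !(dotvC u). Qed.

Lemma dotvZr (k : R) u v : dotv u (k *: v) = k * dotv u v.
Proof. by rewrite dotvC dotvZl dotvC. Qed.

Lemma dotvNr u v : dotv u (- v) = - dotv u v.
Proof. by rewrite dotvC dotvNl dotvC. Qed.

Lemma dotvBr u v w : dotv u (v - w) = dotv u v - dotv u w.
Proof. by rewrite dotvDr dotvNr. Qed.

Lemma sqnorm_ge0 u : 0 <= sqnorm u.
Proof. by apply: sumr_ge0 => i _; rewrite -expr2 sqr_ge0. Qed.

Lemma sqnormZ (k : R) u : sqnorm (k *: u) = k ^+ 2 * sqnorm u.
Proof. by rewrite /sqnorm dotvZl dotvZr mulrA expr2. Qed.

Lemma sqnormN u : sqnorm (- u) = sqnorm u.
Proof. by rewrite /sqnorm dotvNl dotvNr opprK. Qed.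

Lemma sqnormD u v : sqnorm (u + v) = sqnorm u + 2 * dotv u v + sqnorm v.
Proof. rewrite /sqnorm dotvDl !dotvDr (dotvC v u); ring. Qed.

Lemma sqnormB u v : sqnorm (u - v) = sqnorm u - 2 * dotv u v + sqnorm v.
Proof. by rewrite sqnormD sqnormN dotvNr mulrN. Qed.

Lemma sqr_enorm u : enorm u ^+ 2 = sqnorm u.
Proof. by rewrite /enorm sqr_sqrtr // sqnorm_ge0. Qed.

Lemma sqnorm_le_sqr u (c : R) : enorm u <= c -> sqnorm u <= c ^+ 2.
Proof.
move=> uc; have c0 : 0 <= c by apply: le_trans uc; exact: sqrtr_ge0.
by rewrite -sqr_enorm ler_pXn2r ?nnegrE ?sqrtr_ge0.
Qed.

Lemma sqnormD_le u v (e : R) : 0 < e ->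
  sqnorm (u + v) <= (1 + e) * sqnorm u + (1 + e^-1) * sqnorm v.
Proof.
move=> e0; have := sqnorm_ge0 (e *: u - v).
rewrite sqnormB sqnormZ dotvZl => h; rewrite sqnormD -subr_ge0.
have -> : (1 + e) * sqnorm u + (1 + e^-1) * sqnorm v
          - (sqnorm u + 2 * dotv u v + sqnorm v)
        = (e ^+ 2 * sqnorm u - 2 * (e * dotv u v) + sqnorm v) / e.
  by field; rewrite gt_eqF.
by rewrite divr_ge0 // ltW.
Qed.

End InnerProduct.

Lemma convex_set_segment {R : realType} {n : nat} {X : set 'rV[R]_n} {x y} {t : R} :
  convex_set X -> X x -> X y -> 0 <= t <= 1 -> X (x + t *: (y - x)).
Proof.
move=> cX Xx Xy /andP[t0 t1].
have : X (t *: y + (1 - t) *: x).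
  by move/set_mem: (cX y x (Itv01 t0 t1) (mem_set Xy) (mem_set Xx)).
by congr X; apply/rowP => i; rewrite !mxE /=; ring.
Qed.

Section Gradient.
Context {R : realType} {n : nat} {f : 'rV[R]_n -> R} {gf : 'rV[R]_n -> 'rV[R]_n}.
Hypothesis f_grad : has_gradient f gf.

Lemma is_derive_line x v (t : R) :
  is_derive t 1 (fun s : R => f (x + s *: v)) (dotv (gf (x + t *: v)) v).
Proof.
set y := x + t *: v.
have E : (fun h : R => h^-1 *: (((fun s : R => f (x + s *: v)) \o shift t) (h *: 1)
             - f (x + t *: v)))
       = (fun h : R => h^-1 *: ((f \o shift y) (h *: v) - f y)).
  apply: funext => h /=; congr (_ *: (_ - _)); congr f.
  by rewrite /y scalerDl [h *: 1]mulr1 addrC [x + _]addrC addrA.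
have [df dfv] := f_grad y.
have dv : derivable f y v by exact: diff_derivable.
apply: DeriveDef; first by rewrite /derivable E.
by rewrite /derive E -/(derive f y v) deriveE // dfv.
Qed.

Lemma mvt_line x v (l : R) : 0 < l ->
  exists2 c, 0 < c < l & f (x + l *: v) - f x = l * dotv (gf (x + c *: v)) v.
Proof.
move=> l0.
have cont : {within `[0, l], continuous (fun s : R => f (x + s *: v))}.
  apply: derivable_within_continuous => s _.
  exact: (@ex_derive _ _ _ _ _ _ _ (is_derive_line x v s)).
have [c cI E] := MVT l0 (fun s _ => is_derive_line x v s) cont.
exists c; first by move: cI; rewrite in_itv.
by rewrite scale0r addr0 in E; rewrite E subr0 mulrC.
Qed.

End Gradient.

Section Smooth.
Context {R : realType} {n : nat} {f : 'rV[R]_n -> R} {gf : 'rV[R]_n -> 'rV[R]_n}.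
Context {L : R}.
Hypotheses (L_gt0 : 0 < L) (f_smooth : L_smooth L f gf).

Lemma dotv_grad_increment_le y v (t : R) : 0 < t ->
  `|dotv (gf (y + t *: v) - gf y) v| <= L * t * sqnorm v.
Proof.
move=> t0; set u := gf (y + t *: v) - gf y; set p := L * t.
have p0 : 0 < p by rewrite mulr_gt0.
have u_le : sqnorm u <= p ^+ 2 * sqnorm v.
  have := sqnorm_le_sqr _ _ (f_smooth.2 (y + t *: v) y).
  by rewrite exprMn sqr_enorm addrAC subrr add0r sqnormZ mulrA -exprMn.
have uDv := sqnorm_ge0 (u + p *: v); have uBv := sqnorm_ge0 (u - p *: v).
rewrite sqnormD sqnormZ dotvZr in uDv; rewrite sqnormB sqnormZ dotvZr in uBv.
by rewrite ler_norml; apply/andP; split; rewrite -(ler_pM2l p0); nra.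
Qed.

(* The mean value theorem only gives the constant [L] instead of [L / 2];
   the weaker bound suffices. *)
Lemma smooth_upper y v : f (y + v) <= f y + dotv (gf y) v + L * sqnorm v.
Proof.
have [c /andP[c0 c1]] := mvt_line f_smooth.1 y v 1 ltr01.
rewrite scale1r mul1r => E.
have := dotv_grad_increment_le y v c c0; rewrite dotvBl ler_norml => /andP[_ h].
have : L * c * sqnorm v <= L * sqnorm v.
  by rewrite -mulrA ler_pM2l // ler_piMl ?sqnorm_ge0 // ltW.
lra.
Qed.

Lemma first_order_min {X : set 'rV[R]_n} {xs} : convex_set X -> X xs ->
  (forall z, X z -> f xs <= f z) -> forall z, X z -> 0 <= dotv (gf xs) (z - xs).
Proof.
move=> cX Xxs xs_min z Xz; rewrite -oppr_le0.
have S0 := sqnorm_ge0 (z - xs).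
apply: (@ler_of_forall_le_addM _ _ _ (L * sqnorm (z - xs))) => [|t /andP[t0 t1]].
  by rewrite mulr_ge0 // ltW.
have t01 : 0 <= t <= 1 by rewrite ltW.
have lower := xs_min _ (convex_set_segment cX Xxs Xz t01).
have := smooth_upper xs (t *: (z - xs)); rewrite dotvZr sqnormZ => upper.
by rewrite -(ler_pM2l t0); nra.
Qed.

End Smooth.

Section StronglyConvex.
Context {R : realType} {n : nat} {f : 'rV[R]_n -> R} {gf : 'rV[R]_n -> 'rV[R]_n}.
Context {L mu : R}.
Hypotheses (L_gt0 : 0 < L) (mu_gt0 : 0 < mu).
Hypotheses (f_smooth : L_smooth L f gf) (f_sc : strongly_convex mu f).
Implicit Types x y z v : 'rV[R]_n.

Lemma strongly_convex_lower y v :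
  f y + dotv (gf y) v + mu / 2 * sqnorm v <= f (y + v).
Proof.
have V0 := sqnorm_ge0 v.
apply: (@ler_of_forall_le_addM _ _ _ ((L + mu / 2) * sqnorm v)) => [|t /andP[t0 t1]].
  by rewrite mulr_ge0 // addr_ge0 ?divr_ge0 // ltW.
have t01 : 0 <= t <= 1 by rewrite ltW.
have := f_sc (y + v) y t t01.
rewrite [y + v - y]addrAC subrr add0r.
rewrite (_ : t *: (y + v) + (1 - t) *: y = y + t *: v); last first.
  by apply/rowP => i; rewrite !mxE; ring.
have [c /andP[c0 ct] E] := mvt_line f_smooth.1 y v t t0.
have := dotv_grad_increment_le L_gt0 f_smooth y v c c0.
rewrite dotvBl ler_norml => /andP[lip _] sc.
have LcV : L * c * sqnorm v <= L * t * sqnorm v.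
  by rewrite ler_wpM2r // ler_pM2l // ltW.
rewrite -(ler_pM2l t0); nra.
Qed.

Lemma strongly_convex_grad_mono x y :
  mu * sqnorm (x - y) <= dotv (gf x - gf y) (x - y).
Proof.
have := strongly_convex_lower y (x - y); rewrite subrKC => lxy.
have := strongly_convex_lower x (y - x); rewrite subrKC => lyx.
rewrite -opprB sqnormN dotvNr in lyx.
rewrite dotvBl; lra.
Qed.

(* [h] is convex with gradient [gh]; the usual co-coercivity argument for
   convex functions applied to [h] transfers to [gf]. *)
Let h z := f z - mu / 2 * sqnorm z.
Let gh z := gf z - mu *: z.

Let sqnorm_shift x z :
  sqnorm z = sqnorm x + 2 * dotv x (z - x) + sqnorm (z - x).
Proof. by rewrite -sqnormD subrKC. Qed.

Lemma convex_part_lower x z : h x + dotv (gh x) (z - x) <= h z.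
Proof.
have := strongly_convex_lower x (z - x); rewrite subrKC => lower.
rewrite /h /gh (sqnorm_shift x z) dotvBl dotvZl; lra.
Qed.

Lemma convex_part_upper x z : h z <= h x + dotv (gh x) (z - x) + L * sqnorm (z - x).
Proof.
have := smooth_upper L_gt0 f_smooth x (z - x); rewrite subrKC => upper.
have := mulr_ge0 (ltW mu_gt0) (sqnorm_ge0 (z - x)).
rewrite /h /gh (sqnorm_shift x z) dotvBl dotvZl; lra.
Qed.

Lemma convex_part_cocoercive x y :
  h x + dotv (gh x) (y - x) + sqnorm (gh y - gh x) / (4 * L) <= h y.
Proof.
set w := gh y - gh x; set k := (2 * L)^-1; set z := y - k *: w.
have lower := convex_part_lower x z.
have upper := convex_part_upper y z.
have zx : z - x = y - x - k *: w by rewrite /z addrAC.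
have zy : z - y = - (k *: w) by rewrite /z addrAC subrr add0r.
rewrite zx dotvBr dotvZr in lower; rewrite zy dotvNr dotvZr sqnormN sqnormZ in upper.
have ww : sqnorm w = dotv (gh y) w - dotv (gh x) w by rewrite /sqnorm {1}/w dotvBl.
have Lk : L * k ^+ 2 = k / 2 by rewrite /k; field; rewrite gt_eqF.
have k4 : (4 * L)^-1 = k / 2 by rewrite /k; field; rewrite gt_eqF.
rewrite k4; rewrite mulrA Lk in upper; nra.
Qed.

Lemma grad_cocoercive x y :
  sqnorm (gf x - gf y) + mu * (2 * L + mu) * sqnorm (x - y)
    <= 2 * (L + mu) * dotv (gf x - gf y) (x - y).
Proof.
have W_le : sqnorm (gh x - gh y) <= 2 * L * dotv (gh x - gh y) (x - y).
  have cxy := convex_part_cocoercive x y; have cyx := convex_part_cocoercive y x.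
  rewrite -sqnormN opprB -(opprB x y) dotvNr in cxy.
  set W := sqnorm (gh x - gh y) in cxy cyx *.
  have -> : W = 2 * L * (W / (4 * L) + W / (4 * L)) by field; rewrite gt_eqF.
  rewrite ler_pM2l ?mulr_gt0 // dotvBl; lra.
have ghB : gh x - gh y = (gf x - gf y) - mu *: (x - y).
  by apply/rowP => i; rewrite !mxE; ring.
rewrite ghB sqnormB sqnormZ dotvZr !dotvBl dotvZl -/(sqnorm (x - y)) in W_le.
rewrite !dotvBl; nra.
Qed.

Lemma grad_step_contraction x y :
  sqnorm (x - y - 1 / (2 * (mu + L)) *: (gf x - gf y))
    <= ((2 * L + mu) / (2 * (mu + L))) ^+ 2 * sqnorm (x - y).
Proof.
have s0 : 0 < mu + L by rewrite addr_gt0.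
have coco := grad_cocoercive x y.
have mono := ler_wpM2l (ltW mu_gt0) (strongly_convex_grad_mono x y).
have bb := sqnorm_ge0 (gf x - gf y - mu *: (x - y)).
rewrite sqnormB sqnormZ dotvZr in bb.
rewrite (sqnormB (x - y)) sqnormZ dotvZr (dotvC (x - y)).
rewrite -(ler_pM2l (_ : 0 < 4 * (mu + L) ^+ 2)) ?mulr_gt0 ?exprn_gt0 //.
set A := sqnorm (x - y) in coco mono bb *; set B := sqnorm (gf x - gf y) in coco bb *.
set D := dotv (gf x - gf y) (x - y) in coco mono bb *.
have -> : 4 * (mu + L) ^+ 2 * (A - 2 * (1 / (2 * (mu + L)) * D)
            + (1 / (2 * (mu + L))) ^+ 2 * B)
          = 4 * (mu + L) ^+ 2 * A - 4 * (mu + L) * D + B.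
  by field; rewrite gt_eqF.
have -> : 4 * (mu + L) ^+ 2 * (((2 * L + mu) / (2 * (mu + L))) ^+ 2 * A)
          = (2 * L + mu) ^+ 2 * A.
  by field; rewrite gt_eqF.
lra.
Qed.

End StronglyConvex.

Lemma biased_grad_step_bound {R : realType} {n : nat} {f : 'rV[R]_n -> R}
    {gf : 'rV[R]_n -> 'rV[R]_n} {L mu : R} {x xs m : 'rV[R]_n} {C : R} :
  0 < L -> 0 < mu -> L_smooth L f gf -> strongly_convex mu f ->
  enorm (m - gf x) <= C ->
  sqnorm (x - xs - 1 / (2 * (mu + L)) *: (m - gf xs))
    <= (1 - mu / (2 * (mu + L))) * sqnorm (x - xs)
       + (1 / (2 * (mu + L) ^+ 2) + 1 / (2 * mu * L)) * C ^+ 2.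
Proof.
move=> L_gt0 mu_gt0 f_smooth f_sc mC.
have s0 : 0 < mu + L by rewrite addr_gt0.
have q0 : 0 < mu * L + 2 * (mu + L) ^+ 2 by rewrite addr_gt0 ?mulr_gt0 ?exprn_gt0.
set eta := 1 / (2 * (mu + L)).
(* [eps] is forced by the coefficient of [C ^+ 2]:
   [(1 + eps^-1) * eta ^+ 2 = 1 / (2 * (mu + L) ^+ 2) + 1 / (2 * mu * L)]. *)
set eps := mu * L / (mu * L + 2 * (mu + L) ^+ 2).
have eps0 : 0 < eps by rewrite divr_gt0 ?mulr_gt0.
have -> : x - xs - eta *: (m - gf xs)
          = (x - xs - eta *: (gf x - gf xs)) + (- eta) *: (m - gf x).
  by apply/rowP => i; rewrite !mxE; ring.
apply: le_trans (sqnormD_le _ _ _ eps0) _.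
rewrite sqnormZ sqrrN mulrA.
have rho : (1 + eps) * ((2 * L + mu) / (2 * (mu + L))) ^+ 2
           <= 1 - mu / (2 * (mu + L)).
  rewrite -subr_ge0.
  have -> : 1 - mu / (2 * (mu + L)) - (1 + eps) * ((2 * L + mu) / (2 * (mu + L))) ^+ 2
            = 2 * (mu * (2 * L + mu) / (2 * (mu + L))) ^+ 2
              / (mu * L + 2 * (mu + L) ^+ 2).
    by rewrite /eps; field; rewrite !gt_eqF.
  by rewrite divr_ge0 ?(ltW q0) // mulr_ge0 // sqr_ge0.
have -> : (1 + eps^-1) * eta ^+ 2 = 1 / (2 * (mu + L) ^+ 2) + 1 / (2 * mu * L).
  by rewrite /eps /eta; field; rewrite !gt_eqF.
have contr := grad_step_contraction L_gt0 mu_gt0 f_smooth f_sc x xs.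
have A0 := sqnorm_ge0 (x - xs).
apply: lerD.
  apply: le_trans (ler_wpM2l _ contr) _; first by rewrite addr_ge0 ?ltW.
  by rewrite mulrA ler_wpM2r.
by rewrite ler_wpM2l ?sqnorm_le_sqr // addr_ge0 ?divr_ge0 ?mulr_ge0 ?ltW.
Qed.

Section Projection.
Context {R : realType} {n : nat} {X : set 'rV[R]_n} {projX : 'rV[R]_n -> 'rV[R]_n}.
Hypotheses (X_convex : convex_set X) (projXP : is_projection X projX).

Lemma projection_obtuse y z : X z -> dotv (y - projX y) (z - projX y) <= 0.
Proof.
move=> Xz; set p := projX y; have [Xp p_min] := projXP y.
apply: (@ler_of_forall_le_addM _ _ _ (sqnorm (z - p) / 2)) => [|t /andP[t0 t1]].
  by rewrite divr_ge0 ?sqnorm_ge0.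
have t01 : 0 <= t <= 1 by rewrite ltW.
have := sqnorm_le_sqr _ _ (p_min _ (convex_set_segment X_convex Xp Xz t01)).
rewrite sqr_enorm opprD addrA (sqnormB (y - p)) sqnormZ dotvZr => near.
by rewrite add0r -(ler_pM2l t0); nra.
Qed.

Lemma projection_dist_le y xs w (eta : R) :
  X xs -> (forall z, X z -> 0 <= dotv w (z - xs)) -> 0 <= eta ->
  sqnorm (projX y - xs) <= sqnorm (y - (xs - eta *: w)).
Proof.
move=> Xxs xs_opt eta0; set p := projX y; have Xp : X p := (projXP y).1.
have obtuse : 0 <= dotv (p - xs) (y - p).
  by rewrite dotvC -oppr_le0 -dotvNr opprB projection_obtuse.
have toward : 0 <= eta * dotv (p - xs) w by rewrite dotvC mulr_ge0 ?xs_opt.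
have -> : y - (xs - eta *: w) = (p - xs) + (y - p + eta *: w).
  by apply/rowP => i; rewrite !mxE; ring.
have := sqnorm_ge0 (y - p + eta *: w).
rewrite (sqnormD (p - xs)) dotvDr dotvZr; lra.
Qed.

End Projection.

(* No measurability assumption: [projX] need not be measurable.  For
   nonnegative integrands the integral is a supremum over simple functions. *)
Lemma ge0_le_integralT {R : realType} {d} {T : measurableType d}
    (mu : {measure set T -> \bar R}) {f1 f2 : T -> R} :
  (forall w, 0 <= f1 w) -> (forall w, f1 w <= f2 w) ->
  (\int[mu]_w (f1 w)%:E <= \int[mu]_w (f2 w)%:E)%E.
Proof.
move=> f1_ge0 f12.
have f2_ge0 w : 0 <= f2 w := le_trans (f1_ge0 w) (f12 w).
rewrite !ge0_integralTE //.
apply: ereal_sup_le => _ [h /= hf1 <-]; exists h => //= w.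
by apply: le_trans (hf1 w) _; rewrite lee_fin.
Qed.

Section Expectation.
Context {R : realType} {n : nat} {d} {T : measurableType d}.
Context {P : probability T R} {g : T -> 'rV[R]_n}.
Hypothesis g_int : forall i : 'I_n, P.-integrable setT (fun w => (g w ord0 i)%:E).
Let m := mean_vec P g.

Let measurable_coord i : measurable_fun setT (fun w => g w ord0 i).
Proof.
have /integrableP[mf _] := g_int i.
exact/measurable_realfun.measurable_EFinP.
Qed.

Let integrable_coordZ (k : 'rV[R]_n) i :
  P.-integrable setT (fun w => (k ord0 i)%:E * (g w ord0 i)%:E)%E.
Proof. exact: integrableZl. Qed.

Lemma integrable_dotv k : P.-integrable setT (fun w => (dotv k (g w))%:E).
Proof.
under eq_fun => w do rewrite /dotv -sumEFin.
apply: integrable_sum => // i _.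
under eq_fun => w do rewrite EFinM.
exact: integrable_coordZ.
Qed.

Lemma integral_dotv k : (\int[P]_w ((dotv k (g w))%:E) = (dotv k m)%:E)%E.
Proof.
under eq_integral => w _ do rewrite /dotv -sumEFin.
under eq_integral => w _ do under eq_bigr => i _ do rewrite EFinM.
rewrite (integral_sum measurableT (integrable_coordZ k)).
rewrite /dotv -sumEFin; apply: eq_bigr => i _.
rewrite (integralZl measurableT (g_int i)) EFinM /m /mean_vec mxE fineK //.
exact: integrable_fin_num (g_int i).
Qed.

Lemma integrable_sqnorm_centered (D : R) :
  (\int[P]_w ((sqnorm (g w - m))%:E) <= D%:E)%E ->
  P.-integrable setT (fun w => (sqnorm (g w - m))%:E).
Proof.
move=> S_le; apply/integrableP; split.
  apply/measurable_realfun.measurable_EFinP; apply: measurable_sum => i.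
  pose gi w := g w ord0 i - m ord0 i.
  have -> : (fun w => (g w - m) ord0 i * (g w - m) ord0 i) = gi \* gi.
    by apply: funext => w; rewrite /gi /= !mxE.
  have mgi : measurable_fun setT gi.
    exact: measurable_realfun.measurable_funB (measurable_coord i) (measurable_cst _).
  exact: measurable_realfun.measurable_funM.
under eq_integral => w _ do rewrite gee0_abs ?lee_fin ?sqnorm_ge0 //.
by apply: le_lt_trans S_le _; rewrite ltry.
Qed.

Lemma integral_centered_quadratic (c q D : R) (k : 'rV[R]_n) :
  (\int[P]_w ((sqnorm (g w - m))%:E) <= D%:E)%E ->
  (\int[P]_w ((c + dotv k (g w - m) + q * sqnorm (g w - m))%:E)
    = c%:E + q%:E * \int[P]_w ((sqnorm (g w - m))%:E))%E.
Proof.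
move=> /integrable_sqnorm_centered S_int.
have cst_int : P.-integrable setT (fun=> (c - dotv k m)%:E).
  exact: finite_measure_integrable_cst.
rewrite (eq_integral (fun w => (c - dotv k m)%:E + (dotv k (g w))%:E
                               + q%:E * (sqnorm (g w - m))%:E)%E); last first.
  by move=> w _; rewrite dotvBr -EFinM -!EFinD; congr EFin; ring.
rewrite integralD //; last exact: integrableZl.
  rewrite integralD ?integrable_dotv // integral_cst //.
  rewrite [X in (_ * X)%E](_ : _ = 1%E) ?mule1; last exact: probability_setT.
  by rewrite integral_dotv integralZl // -EFinD subrK.
exact: integrableD (integrable_dotv k).
Qed.

End Expectation.

Theorem lemmaB1 (R : realType) (n : nat) (f : 'rV[R]_n -> R)
  (gf : 'rV[R]_n -> 'rV[R]_n) (L mu : R)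
  (X : set 'rV[R]_n) (projX : 'rV[R]_n -> 'rV[R]_n) (xs : 'rV[R]_n)
  (d : measure_display) (T : measurableType d) (P : probability T R)
  (x : 'rV[R]_n) (g : T -> 'rV[R]_n) (C D : R) :
  0 < mu -> mu <= L ->
  L_smooth L f gf -> strongly_convex mu f ->
  X !=set0 -> closed X -> convex_set X ->
  is_projection X projX ->
  X xs -> (forall z, X z -> f xs <= f z) ->
  (forall i : 'I_n, P.-integrable setT (fun w => (g w ord0 i)%:E)) ->
  0 <= C -> 0 <= D ->
  enorm (mean_vec P g - gf x) <= C ->
  (\int[P]_w ((sqnorm (g w - mean_vec P g))%:E) <= D%:E)%E ->
  (\int[P]_w ((sqnorm (projX (x - (1 / (2 * (mu + L))) *: g w) - xs))%:E)
    <= ((1 - mu / (2 * (mu + L))) * sqnorm (x - xs)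
        + (1 / (2 * (mu + L) ^+ 2) + 1 / (2 * mu * L)) * C ^+ 2
        + 1 / (4 * (mu + L) ^+ 2) * D)%:E)%E.
Proof.
(* Nonemptiness and closedness of [X] only ensure that [projX] exists. *)
move=> mu_gt0 muL f_smooth f_sc _ _ X_convex projXP Xxs xs_min g_int _ _ mC S_le.
have L_gt0 : 0 < L := lt_le_trans mu_gt0 muL.
have s0 : 0 < mu + L by rewrite addr_gt0.
set eta := 1 / (2 * (mu + L)).
set m := mean_vec P g in mC S_le *.
set c0 := x - xs - eta *: (m - gf xs).
have xs_opt := first_order_min L_gt0 f_smooth X_convex Xxs xs_min.
have step w : sqnorm (projX (x - eta *: g w) - xs)
    <= sqnorm c0 + dotv (- (2 * eta) *: c0) (g w - m) + eta ^+ 2 * sqnorm (g w - m).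
  have eta0 : 0 <= eta by rewrite divr_ge0 ?mulr_ge0 ?ltW.
  apply: le_trans (projection_dist_le X_convex projXP _ _ _ _ Xxs xs_opt eta0) _.
  have -> : x - eta *: g w - (xs - eta *: gf xs) = c0 - eta *: (g w - m).
    by apply/rowP => i; rewrite !mxE; ring.
  by rewrite (sqnormB c0) sqnormZ dotvZr dotvZl mulNr mulrA.
apply: le_trans (ge0_le_integralT P (fun w => sqnorm_ge0 _) step) _.
rewrite (integral_centered_quadratic g_int _ _ _ _ S_le).
apply: le_trans (leeD2l _ (lee_wpmul2l _ S_le)) _; first by rewrite lee_fin sqr_ge0.
rewrite -EFinM -EFinD lee_fin.
have -> : eta ^+ 2 = 1 / (4 * (mu + L) ^+ 2) by rewrite /eta; field; rewrite gt_eqF.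
by rewrite lerD2r (biased_grad_step_bound L_gt0 mu_gt0 f_smooth f_sc mC).
Qed.
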